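(* Let $\mathfrak{g}$ be a nilpotent real Lie algebra of dimension $6$, and let $\mathfrak{g}^*=V_1\oplus V_2$ be a coherent splitting of $\mathfrak{g}$. Then $V_1\subset\ker d$ and the derived length of $\mathfrak{g}$ is $1$ or $2$.
   Context: $d\colon\mathfrak{g}^*\to\Lambda^2\mathfrak{g}^*$ is the Chevalley–Eilenberg differential, $d\alpha(X,Y)=-\alpha([X,Y])$, extended to a derivation of $\Lambda^*\mathfrak{g}^*$. A coherent splitting is a decomposition $\mathfrak{g}^*=V_1\oplus V_2$ with $\dim V_1=2$ such that, with $\Lambda^{p,q}=\Lambda^pV_1\otimes\Lambda^qV_2$, $d(\Lambda^{p,q})\subset\Lambda^{p+1,q}+\Lambda^{p+2,q-1}$ for all $p,q$. The derived length is the least $n$ with $\mathcal{D}^n(\mathfrak{g})=0$, where $\mathcal{D}(\mathfrak{g})=[\mathfrak{g},\mathfrak{g}]$. *)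

From HB Require Import structures.
From mathcomp Require Import all_boot all_order all_algebra.
From mathcomp Require Import reals.
Set Implicit Arguments. Unset Strict Implicit. Unset Printing Implicit Defensive.
Import Order.TTheory GRing.Theory Num.Theory.
Local Open Scope ring_scope.

(* A 6-dimensional real Lie algebra g is modelled as 'rV[R]_6 with a bracket
   br. The dual g^* is modelled by row vectors, paired with g by [pair]. *)
Section Defs.
Variable R : realType.
Local Notation vec := 'rV[R]_6.

Definition pair (a X : vec) : R := (a *m X^T) 0 0.

Definition is_lie_bracket (br : vec -> vec -> vec) : Prop :=
  [/\ (forall (c : R) x y z, br (c *: x + y) z = c *: br x z + br y z),
      (forall (c : R) x y z, br x (c *: y + z) = c *: br x y + br x z),
      (forall x, br x x = 0) &
      (forall x y z, br x (br y z) + br y (br z x) + br z (br x y) = 0)].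

Definition brspan (br : vec -> vec -> vec) (S T : 'M[R]_6) : 'M[R]_6 :=
  (\sum_(i < 6) \sum_(j < 6) <<br (row i S) (row j T)>>)%MS.

Fixpoint lcs br (n : nat) : 'M[R]_6 :=
  if n is m.+1 then brspan br 1%:M (lcs br m) else 1%:M.

Fixpoint dser br (n : nat) : 'M[R]_6 :=
  if n is m.+1 then brspan br (dser br m) (dser br m) else 1%:M.

Definition nilpotent br : Prop := exists n, (lcs br n <= (0 : 'M[R]_6))%MS.

Definition derived_length br (n : nat) : Prop :=
  (dser br n <= (0 : 'M[R]_6))%MS /\ forall m, (m < n)%N -> ~~ (dser br m <= (0 : 'M[R]_6))%MS.

Definition form (k : nat) := ('I_k -> vec) -> R.

Definition one_form (a : vec) : form 1 := fun X => pair a (X ord0).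

(* Chevalley-Eilenberg differential:
   (dw)(X_0..X_k) = sum_{i<j} (-1)^(i+j) w([X_i,X_j], X_0,..^i..^j..,X_k);
   for k = 1 this gives d a (X,Y) = - a([X,Y]). *)
Definition dform br (k : nat) (w : form k) : form k.+1 := fun X =>
  \sum_(i < k.+1) \sum_(j < k.+1 | (i < j)%N)
     (-1) ^+ (i + j) *
     w (fun l : 'I_k => if l == 0 :> nat then br (X i) (X j)
                        else X (inord (bump j (bump i l.-1)))).

(* the decomposable form g_0 ^ ... ^ g_{k-1}, evaluated as det [g_i(X_j)] *)
Definition wedge (k : nat) (g : 'I_k -> vec) : form k :=
  fun X => \det (\matrix_(i < k, j < k) pair (g i) (X j)).

(* w lies in Lambda^{p,q} = Lambda^p V1 (x) Lambda^q V2 (as k-forms, k = p+q) *)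
Definition inLam (V1 V2 : 'M[R]_6) (p q k : nat) (w : form k) : Prop :=
  (p + q = k)%N /\
  exists n (c : 'I_n -> R) (g : 'I_n -> 'I_k -> vec),
    (forall t (i : 'I_k), ((i < p)%N -> (g t i <= V1)%MS) /\ ((p <= i)%N -> (g t i <= V2)%MS)) /\
    forall X, w X = \sum_(t < n) c t * wedge (g t) X.

Definition coherent_splitting br (V1 V2 : 'M[R]_6) : Prop :=
  [/\ \rank V1 = 2%N, mxdirect (V1 + V2), (V1 + V2 == 1%:M)%MS &
      forall p q (w : form (p + q)), inLam V1 V2 p q w ->
        exists w1 w2 : form (p + q).+1,
          inLam V1 V2 p.+1 q w1 /\
          ((q = 0%N /\ forall X, w2 X = 0) \/ inLam V1 V2 p.+2 q.-1 w2) /\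
          forall X, dform br w X = w1 X + w2 X].

End Defs.

(** Write [W] for the annihilator of [V1] in [g]. Coherence applied to
    a 1-form [a] of [V1] says that [da] is a multiple of the area form of
    [V1], so [da] vanishes as soon as one argument lies in [W]. Hence
    [a([x,y])] only depends on the classes of [x] and [y] in [g/W], which
    is 2-dimensional: [a([x,y]) = det(x,y) a([e1,e2])] for a basis
    [e1, e2] of [g] modulo [W]. If [[e1,e2]] were not in [W], a suitable
    combination [x0] of [e1, e2] would satisfy [a([x0,z]) = a(z)] for
    [z = [e1,e2]] and all [a] in [V1]; iterating, [a(z) = a((ad x0)^n z)],
    which vanishes for large [n] by nilpotency. For a 1-form of [V2], [da] lies
    in [Lam^{1,1} + Lam^{2,0}], and each such form vanishes on [W x W];
    thus [W] is an abelian ideal containing [[g,g]], and [D^2 g = 0]. *)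
From Pilot Require Import Defs.
From HB Require Import structures.
From mathcomp Require Import all_boot all_order all_algebra.
From mathcomp Require Import reals.
From mathcomp Require Import ring.
Import Order.TTheory GRing.Theory Num.Theory.
Set Implicit Arguments. Unset Strict Implicit. Unset Printing Implicit Defensive.
Local Open Scope ring_scope.

Section Pairing.
Variable R : realType.
Local Notation vec := 'rV[R]_6.

Lemma pairDl (a b x : vec) : pair (a + b) x = pair a x + pair b x.
Proof. by rewrite /pair mulmxDl mxE. Qed.

Lemma pairZl (c : R) (a x : vec) : pair (c *: a) x = c * pair a x.
Proof. by rewrite /pair -scalemxAl mxE. Qed.

Lemma pairDr (a x y : vec) : pair a (x + y) = pair a x + pair a y.
Proof. by rewrite /pair linearD mulmxDr mxE. Qed.

Lemma pairZr (c : R) (a x : vec) : pair a (c *: x) = c * pair a x.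
Proof. by rewrite /pair linearZ -scalemxAr mxE. Qed.

Lemma pair0r (a : vec) : pair a 0 = 0.
Proof. by rewrite /pair trmx0 mulmx0 mxE. Qed.

Lemma pairNr (a x : vec) : pair a (- x) = - pair a x.
Proof. by rewrite -scaleN1r pairZr mulN1r. Qed.

Lemma pairBr (a x y : vec) : pair a (x - y) = pair a x - pair a y.
Proof. by rewrite pairDr pairNr. Qed.

Lemma pair_row m n (A : 'M[R]_(m, 6)) (B : 'M[R]_(n, 6)) i j :
  pair (row i A) (row j B) = (B *m A^T) j i.
Proof. by rewrite /pair !mxE; apply: eq_bigr => k _; rewrite !mxE mulrC. Qed.

Lemma pair_eq0 (x : vec) : (forall a : vec, pair a x = 0) -> x = 0.
Proof.
move=> x0; apply/rowP => j; rewrite mxE.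
by rewrite -(x0 (row j 1%:M)) -{2}(row_id 0 x) pair_row trmx1 mulmx1.
Qed.

Lemma dual_basis_of_rank2 (V : 'M[R]_6) : \rank V = 2%N ->
  exists al be e1 e2 : vec,
  (forall a, (a <= V)%MS -> exists u v, a = u *: al + v *: be) /\
  [/\ pair al e1 = 1, pair be e1 = 0, pair al e2 = 0 & pair be e2 = 1].
Proof.
move=> rkV; have := eq_row_base V; move: (row_base V); rewrite rkV => B eqB.
have : row_full B^T by rewrite /row_full mxrank_tr eqB rkV.
case/row_fullP => C CB.
exists (row 0 B), (row 1 B), (row 0 C), (row 1 C); split.
  move=> a; rewrite -eqB => /submxP [D ->].
  rewrite mulmx_sum_row !big_ord_recl big_ord0 addr0.
  by exists (D 0 0), (D 0 1); rewrite (_ : lift ord0 ord0 = 1) //; apply: val_inj.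
by rewrite !pair_row CB !mxE.
Qed.

Variable V1 : 'M[R]_6.

Definition annihilated (x : vec) := forall a, (a <= V1)%MS -> pair a x = 0.

Lemma annihilatedP (x : vec) :
  reflect (annihilated x) (x <= kermx V1^T)%MS.
Proof.
rewrite sub_kermx; apply: (iffP eqP) => [xV1 a /submxP [D ->] | xW].
  by rewrite /pair -mulmxA -[V1 *m _]trmxK trmx_mul trmxK xV1 trmx0 mulmx0 mxE.
apply/rowP => j; rewrite [RHS]mxE -(xW (row j V1)) ?row_sub //.
by rewrite -[in RHS](row_id 0 x) pair_row.
Qed.

End Pairing.

Lemma det_row0 (R : comNzRingType) n (A : 'M[R]_n) i0 :
  (forall j, A i0 j = 0) -> \det A = 0.
Proof. by move=> A0; rewrite (expand_det_row A i0) big1 // => j _; rewrite A0 mul0r. Qed.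

Lemma det_col0 (R : comNzRingType) n (A : 'M[R]_n) j0 :
  (forall i, A i j0 = 0) -> \det A = 0.
Proof. by move=> A0; rewrite -det_tr (@det_row0 _ _ _ j0) // => i; rewrite mxE. Qed.

Section Bracket.
Variable R : realType.
Local Notation vec := 'rV[R]_6.
Variable br : vec -> vec -> vec.

Lemma dform_one_form (a : vec) (X : 'I_2 -> vec) :
  dform br (one_form a) X = - pair a (br (X 0) (X 1)).
Proof.
rewrite /dform !big_ord_recl big_ord0 /=.
rewrite !big_mkcond !big_ord_recl !big_ord0 /=.
rewrite big_mkcond !big_ord_recl big_ord0 /= /one_form /bump /=.
rewrite expr1 mulN1r !addr0 add0r.
by have -> : lift ord0 ord0 = 1 :> 'I_2 by apply: val_inj.
Qed.

Hypothesis br_lie : is_lie_bracket br.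

Lemma brDl x y z : br (x + y) z = br x z + br y z.
Proof. by case: br_lie => brl _ _ _; have := brl 1 x y z; rewrite !scale1r. Qed.

Lemma brDr x y z : br z (x + y) = br z x + br z y.
Proof. by case: br_lie => _ brr _ _; have := brr 1 z x y; rewrite !scale1r. Qed.

Lemma br0l z : br 0 z = 0.
Proof. by apply/eqP; rewrite -[eqbLHS](addrK (br 0 z)) -brDl addr0 subrr. Qed.

Lemma br0r z : br z 0 = 0.
Proof. by apply/eqP; rewrite -[eqbLHS](addrK (br z 0)) -brDr addr0 subrr. Qed.

Lemma brZl c x z : br (c *: x) z = c *: br x z.
Proof. by case: br_lie => brl _ _ _; have := brl c x 0 z; rewrite !addr0 br0l addr0. Qed.

Lemma brZr c x z : br z (c *: x) = c *: br z x.
Proof. by case: br_lie => _ brr _ _; have := brr c z x 0; rewrite !addr0 br0r addr0. Qed.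

Lemma brxx x : br x x = 0.
Proof. by case: br_lie. Qed.

Lemma brC x y : br y x = - br x y.
Proof.
apply/eqP; rewrite -addr_eq0 addrC.
by have := brxx (x + y); rewrite brDl !brDr !brxx add0r addr0 => ->.
Qed.

Lemma br_lcs n x u : (u <= lcs br n)%MS -> (br x u <= lcs br n.+1)%MS.
Proof.
case/submxP => D ->; rewrite mulmx_sum_row -[x]mulmx1 mulmx_sum_row.
rewrite (big_morph _ (fun u v => brDl u v _) (br0l _)); apply: summx_sub => i _.
rewrite brZl scalemx_sub //.
rewrite (big_morph _ (fun u v => brDr u v _) (br0r _)); apply: summx_sub => j _.
rewrite brZr scalemx_sub //= /brspan.
by apply: (sumsmx_sup i) => //; apply: (sumsmx_sup j) => //; rewrite genmxE.
Qed.

End Bracket.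

Lemma brspan_sub (R : realType) br (S T U : 'M[R]_6) :
  (forall i j, (br (row i S) (row j T) <= U)%MS) -> (brspan br S T <= U)%MS.
Proof.
move=> STU; apply/sumsmx_subP => i _; apply/sumsmx_subP => j _.
by rewrite genmxE STU.
Qed.

Lemma derived_length_le2 (R : realType) br :
  (dser br 2 <= (0 : 'M[R]_6))%MS -> derived_length br 1 \/ derived_length br 2.
Proof.
have D0_neq0 : ~~ (dser br 0 <= (0 : 'M[R]_6))%MS by rewrite submx0 oner_eq0.
move=> D2; case: (boolP (dser br 1 <= (0 : 'M[R]_6))%MS) => D1; [left | right]; split => //.
  by case.
by case=> [|[|]].
Qed.

Section Splitting.
Variable R : realType.
Local Notation vec := 'rV[R]_6.
Variables V1 V2 : 'M[R]_6.
Local Notation annihilated := (annihilated V1).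

Definition args2 (x y : vec) : 'I_2 -> vec :=
  fun i => if val i == 0%N then x else y.

Lemma inLam_one_form p q (a : vec) : (p + q = 1)%N ->
  ((0 < p)%N -> (a <= V1)%MS) -> ((p <= 0)%N -> (a <= V2)%MS) ->
  inLam V1 V2 p q (one_form a).
Proof.
move=> pq aV1 aV2; split => //; exists 1%N, (fun _ => 1), (fun _ _ => a).
split; first by move=> t [[|//] i1] /=; split => // /aV1.
by move=> X; rewrite big_ord1 mul1r /wedge det_mx11 mxE.
Qed.

Lemma inLam_annihilated_args p q k (w : Defs.form R k) X : inLam V1 V2 p q w ->
  (0 < p)%N -> (forall j, annihilated (X j)) -> w X = 0.
Proof.
case=> pq [n [c [g [gV w_sum]]]] p_gt0 Xann; rewrite w_sum big1 // => t _.
have k_gt0 : (0 < k)%N by rewrite -pq (leq_trans p_gt0) ?leq_addr.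
rewrite /wedge (@det_row0 _ _ _ (Ordinal k_gt0)) ?mulr0 // => j.
by rewrite mxE Xann // (gV t (Ordinal k_gt0)).1.
Qed.

Lemma inLam_k0_annihilated_arg k (w : Defs.form R k) X j : inLam V1 V2 k 0 w ->
  annihilated (X j) -> w X = 0.
Proof.
case=> _ [n [c [g [gV w_sum]]]] Xann; rewrite w_sum big1 // => t _.
rewrite /wedge (@det_col0 _ _ _ j) ?mulr0 // => i.
by rewrite mxE Xann // (gV t i).1.
Qed.

Variable br : vec -> vec -> vec.
Hypothesis br_lie : is_lie_bracket br.
Hypothesis coh : coherent_splitting br V1 V2.

(* Coherence in bidegree (1,0) puts [d a] in [Lam^{2,0}], and such forms
   vanish as soon as one argument is annihilated by [V1]. *)
Lemma pair_br_annihilated a x u : (a <= V1)%MS -> annihilated u ->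
  pair a (br x u) = 0.
Proof.
move=> aV1 u_ann; case: coh => _ _ _ /(_ 1%N 0%N (one_form a)) [].
  exact: inLam_one_form.
move=> w1 [w2 [w1_20 [[[_ w2_0] | [//]] da]]].
have := da (args2 x u); rewrite dform_one_form w2_0 addr0.
rewrite (@inLam_k0_annihilated_arg _ _ _ 1 w1_20) //.
by move/eqP; rewrite oppr_eq0 => /eqP.
Qed.

Lemma pair_annihilated_br a x u : (a <= V1)%MS -> annihilated u ->
  pair a (br u x) = 0.
Proof. by move=> aV1 u_ann; rewrite (brC br_lie) pairNr pair_br_annihilated ?oppr0. Qed.

Hypothesis br_nil : nilpotent br.

Lemma annihilated_of_ad_fixed x0 z :
  (forall a, (a <= V1)%MS -> pair a (br x0 z) = pair a z) -> annihilated z.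
Proof.
move=> x0_fix; have [N lcsN] := br_nil.
have iter_ad n : (iter n (br x0) z <= lcs br n)%MS /\
    forall a, (a <= V1)%MS -> pair a (iter n (br x0) z) = pair a z.
  elim: n => [|n [lcs_n fix_n]]; first by split => //; apply: submx1.
  split=> [|a aV1 /=]; first exact: br_lcs.
  rewrite -(subrK z (iter n (br x0) z)) (brDr br_lie) pairDr x0_fix //.
  by rewrite pair_br_annihilated ?add0r // => v vV1; rewrite pairBr fix_n ?subrr.
have [lcs_N fix_N] := iter_ad N.
have: (iter N (br x0) z <= (0 : 'M[R]_6))%MS by apply: submx_trans lcs_N lcsN.
by rewrite submx0 => /eqP adNz a aV1; rewrite -fix_N // adNz pair0r.
Qed.

Section DualBasis.
Variables al be e1 e2 : vec.
Hypotheses (V1_span : forall a, (a <= V1)%MS -> exists u v, a = u *: al + v *: be)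
  (al_e1 : pair al e1 = 1) (be_e1 : pair be e1 = 0)
  (al_e2 : pair al e2 = 0) (be_e2 : pair be e2 = 1).

Let coset_rep (x : vec) := pair al x *: e1 + pair be x *: e2.

Lemma annihilated_sub_coset_rep x : annihilated (x - coset_rep x).
Proof.
move=> v /V1_span [u [w ->]].
rewrite !pairDl !pairZl !pairBr !pairDr !pairZr al_e1 be_e1 al_e2 be_e2.
ring.
Qed.

Lemma pair_V1_br_det a x y : (a <= V1)%MS ->
  pair a (br x y) = (pair al x * pair be y - pair be x * pair al y) * pair a (br e1 e2).
Proof.
move=> aV1.
have -> : br x y = br (x - coset_rep x + coset_rep x) (y - coset_rep y + coset_rep y).
  by rewrite !subrK.
rewrite (brDl br_lie) pairDr (pair_annihilated_br _ aV1 (annihilated_sub_coset_rep x)).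
rewrite (brDr br_lie) pairDr (pair_br_annihilated _ aV1 (annihilated_sub_coset_rep y)).
rewrite /coset_rep !(brDl br_lie) !(brDr br_lie) !(brZl br_lie) !(brZr br_lie).
rewrite !(brxx br_lie) (brC br_lie e1 e2) !pairDr !pairZr pairNr !pair0r.
ring.
Qed.

Lemma annihilated_br_e1e2 : annihilated (br e1 e2).
Proof.
set w := br e1 e2; set s := pair al w; set t := pair be w.
have [t0 | t_neq0] := eqVneq t 0.
  have [s0 | s_neq0] := eqVneq s 0.
    by move=> a aV1; have := annihilated_sub_coset_rep w aV1;
      rewrite /coset_rep -/s -/t s0 t0 !scale0r !addr0 subr0.
  apply: (@annihilated_of_ad_fixed (- s^-1 *: e2)) => a0 a0V1.
  by rewrite (brZl br_lie) pairZr (pair_V1_br_det _ _ a0V1) al_e2 be_e2 -/s -/t; field.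
apply: (@annihilated_of_ad_fixed (t^-1 *: e1)) => a0 a0V1.
by rewrite (brZl br_lie) pairZr (pair_V1_br_det _ _ a0V1) al_e1 be_e1 -/s -/t; field.
Qed.

End DualBasis.

Lemma pair_V1_br a x y : (a <= V1)%MS -> pair a (br x y) = 0.
Proof.
case: coh => rkV1 _ _ _.
have [al [be [e1 [e2 [V1_span [al_e1 be_e1 al_e2 be_e2]]]]]] := dual_basis_of_rank2 rkV1.
move=> aV1; rewrite (pair_V1_br_det V1_span al_e1 be_e1 al_e2 be_e2 _ _ aV1).
by rewrite (annihilated_br_e1e2 V1_span al_e1 be_e1 al_e2 be_e2 aV1) mulr0.
Qed.

Lemma br_annihilated_eq0 x y : annihilated x -> annihilated y -> br x y = 0.
Proof.
move=> x_ann y_ann; apply: pair_eq0 => a.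
case: coh => _ _ V12 coh_d.
have /sub_addsmxP [[D1 D2] /= ->] : (a <= V1 + V2)%MS by rewrite (eqmxP V12) submx1.
rewrite pairDl pair_V1_br ?submxMl // add0r.
have xy_ann j : annihilated (args2 x y j) by rewrite /args2; case: ifP.
have [|w1 [w2 [w1_11 [w2_eq da]]]] := coh_d 0%N 1%N (one_form (D2 *m V2)).
  by apply: inLam_one_form => //; rewrite submxMl.
have := da (args2 x y); rewrite dform_one_form (inLam_annihilated_args w1_11) //.
have -> : w2 (args2 x y) = 0.
  by case: w2_eq => [[//] | w2_20]; apply: (inLam_annihilated_args w2_20).
by rewrite addr0 => /eqP; rewrite oppr_eq0 => /eqP.
Qed.

Lemma dser2_eq0 : (dser br 2 <= (0 : 'M[R]_6))%MS.
Proof.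
have D1_W : (dser br 1 <= kermx V1^T)%MS.
  by apply: brspan_sub => i j; apply/annihilatedP => a aV1; apply: pair_V1_br.
apply: brspan_sub => i j; rewrite br_annihilated_eq0 ?sub0mx //;
  by apply/annihilatedP; apply: submx_trans (row_sub _ _) D1_W.
Qed.

End Splitting.

Theorem lemma4 (R : realType) (br : 'rV[R]_6 -> 'rV[R]_6 -> 'rV[R]_6)
  (V1 V2 : 'M[R]_6) :
  is_lie_bracket br -> nilpotent br -> coherent_splitting br V1 V2 ->
  (forall a : 'rV[R]_6, (a <= V1)%MS ->
     forall X : 'I_2 -> 'rV[R]_6, dform br (one_form a) X = 0) /\
  (derived_length br 1 \/ derived_length br 2).
Proof.
move=> br_lie br_nil coh; split.
  by move=> a aV1 X; rewrite dform_one_form (pair_V1_br br_lie coh br_nil) ?oppr0.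
exact/derived_length_le2/(dser2_eq0 br_lie coh br_nil).
Qed.
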